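(* Let $W$ be a linear space over $\mathbb{K}\in\{\mathbb{R},\mathbb{C}\}$, let $0<q\le 1$, and let $V\neq\{0\}$ be a $W$-spreading $q$-space. Then the (algebraic) dimension of $V$ is at least $\mathfrak{c}$, the cardinality of the continuum.
   Context: For $0<q\le 1$, a $q$-norm on a linear space $X$ is a map $\|\cdot\|\colon X\to[0,\infty)$ with $\|x\|=0$ iff $x=0$, $\|\lambda x\|=|\lambda|\,\|x\|$, and $\|x+y\|^q\le\|x\|^q+\|y\|^q$; a $q$-Banach space is a space with a complete $q$-norm. $W^{\mathbb{N}}$ denotes the linear space of all $W$-valued sequences with coordinatewise operations. A $W$-spreading $q$-space is a linear subspace $V$ of $W^{\mathbb{N}}$ endowed with a complete $q$-norm $\|\cdot\|_V$ such that: whenever $(a_j)_{j=1}^\infty\in V$ and $\mathbb{N}_0=\{j_1<j_2<j_3<\cdots\}$ is an infinite subset of $\mathbb{N}$, the sequence $(b_k)_{k=1}^\infty$ defined by $b_k=a_i$ if $k=j_i$ and $b_k=0$ if $k\notin\mathbb{N}_0$ belongs to $V$ and satisfies $\|(b_k)_k\|_V\le\|(a_j)_j\|_V$. *)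

From HB Require Import structures.
From mathcomp Require Import all_boot all_order all_algebra.
From mathcomp Require Import reals exp.
From mathcomp Require Export complex.
Set Implicit Arguments.
Unset Strict Implicit.
Unset Printing Implicit Defensive.
Import Order.TTheory GRing.Theory Num.Theory.
Local Open Scope ring_scope.

(* Sequences in W are functions nat -> W (W^N with coordinatewise operations);
   the index set N = {1,2,...} of the paper is represented by nat = {0,1,...}. *)

Section SpreadingDefs.
Variables (R : realType) (K : pzRingType) (absK : K -> R) (W : lmodType K).

Definition seq0 : nat -> W := fun _ => 0.

Definition lin_subspace (V : (nat -> W) -> Prop) : Prop :=
  V seq0 /\
  (forall x y, V x -> V y -> V (fun n => x n + y n)) /\
  (forall (c : K) x, V x -> V (fun n => c *: x n)).

Definition is_qnorm (V : (nat -> W) -> Prop) (nrm : (nat -> W) -> R) (q : R) : Prop :=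
  (forall x, V x -> 0 <= nrm x) /\
  (forall x, V x -> (nrm x = 0 <-> x = seq0)) /\
  (forall (c : K) x, V x -> nrm (fun n => c *: x n) = absK c * nrm x) /\
  (forall x y, V x -> V y ->
     powR (nrm (fun n => x n + y n)) q <= powR (nrm x) q + powR (nrm y) q).

Definition qcomplete (V : (nat -> W) -> Prop) (nrm : (nat -> W) -> R) : Prop :=
  forall u : nat -> (nat -> W),
    (forall k, V (u k)) ->
    (forall e : R, 0 < e -> exists N : nat, forall m n : nat, (N <= m)%N -> (N <= n)%N ->
        nrm (fun i => u m i - u n i) < e) ->
    exists x, V x /\
      (forall e : R, 0 < e -> exists N : nat, forall n : nat, (N <= n)%N ->
        nrm (fun i => u n i - x i) < e).

(* spreading property: j enumerates increasingly an infinite subset N0 of N,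
   and b is the spread sequence: b (j i) = a i, b k = 0 for k outside N0. *)
Definition spreading (V : (nat -> W) -> Prop) (nrm : (nat -> W) -> R) : Prop :=
  forall (a : nat -> W) (j : nat -> nat),
    V a ->
    (forall i i', (i < i')%N -> (j i < j i')%N) ->
    forall b : nat -> W,
      (forall i, b (j i) = a i) ->
      (forall k, (forall i, j i <> k) -> b k = 0) ->
      V b /\ nrm b <= nrm a.

Definition spreading_qspace (V : (nat -> W) -> Prop) (nrm : (nat -> W) -> R) (q : R) : Prop :=
  lin_subspace V /\ is_qnorm V nrm q /\ qcomplete V nrm /\ spreading V nrm.

(* the algebraic dimension of V is at least the continuum (= #|R|):
   there is a linearly independent family in V indexed by R *)
Definition dim_ge_continuum (V : (nat -> W) -> Prop) : Prop :=
  exists f : R -> (nat -> W),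
    (forall r, V (f r)) /\
    (forall s : seq R, uniq s -> forall c : R -> K,
       (forall n, \sum_(r <- s) c r *: f r n = 0) ->
       forall r, r \in s -> c r = 0).

End SpreadingDefs.

From HB Require Import structures.
From mathcomp Require Import all_boot all_order all_algebra.
From mathcomp Require Import boolp functions reals exp complex.
From mathcomp Require Import lra zify.
Set Implicit Arguments.
Unset Strict Implicit.
Unset Printing Implicit Defensive.

Import Order.TTheory GRing.Theory Num.Theory.
Local Open Scope ring_scope.

(* First, V contains a vector with infinitely many nonzero coordinates. If
   x <> 0 vanishes from M on, pick t with |t|^q = 1/2 and let S shift sequences
   by M places; by the spreading property u |-> x + t S u halves the metric
   ||u - v||^q, and by completeness it has a fixed point y, whence
   y (k M + i) = t^k x i. Coordinates need not be continuous for the q-norm, so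
   they are read off this exact fixed-point equation, not off approximations.
   Second, spread such a z along the strictly increasing maps
   j_r n = 2^(j_r (n - 1)) (2 c_r n + 1), where c_r n encodes floor (2^n r).
   For r <> r' the codes c_r, c_r' differ eventually, so j_r i is outside the
   range of j_r' for large i; at such a j_r i with z i <> 0 only the copy
   indexed by r is nonzero, which gives linear independence. *)

Lemma pow2_odd_inj (a b a' b' : nat) :
  (2 ^ a * (2 * b).+1 = 2 ^ a' * (2 * b').+1)%N -> a = a' /\ b = b'.
Proof.
wlog le_aa' : a b a' b' / (a <= a')%N.
  move=> wlog_le E; have [/wlog_le/(_ E)//|/ltnW le_a'a] := leqP a a'.
  by have [] := wlog_le _ _ _ _ le_a'a (esym E).
rewrite -(subnKC le_aa') expnD -mulnA => /eqP; rewrite eqn_pmul2l ?expn_gt0 //.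
case: (a' - a)%N => [|d] /eqP E.
  by rewrite addn0; split => //; lia.
by have := congr1 odd E; rewrite oddM /= expnS !oddM.
Qed.

Fixpoint prefix_code (e : nat -> nat) (n : nat) : nat :=
  2 ^ (if n is n'.+1 then prefix_code e n' else 0) * (2 * e n).+1.

Lemma prefix_code_gt0 e n : (0 < prefix_code e n)%N.
Proof. by case: n => [|n] /=; rewrite muln_gt0 expn_gt0. Qed.

Lemma prefix_code_mono e : {homo prefix_code e : m n / (m < n)%N}.
Proof.
apply: homo_ltn => [? ? ?|n]; first exact: ltn_trans.
by rewrite /= (leq_trans (ltn_expl _ (ltnSn 1))) // leq_pmulr.
Qed.

Lemma prefix_code_eq e e' n m :
  prefix_code e n = prefix_code e' m -> n = m /\ e n = e' m.
Proof.
elim: n m => [|n IH] [|m] /= /pow2_odd_inj [E ->] //.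
- by have := prefix_code_gt0 e' m; rewrite -E.
- by have := prefix_code_gt0 e n; rewrite E.
- by have [-> _] := IH _ E.
Qed.

Section Spread.
Variables (W : zmodType) (j : nat -> nat).

Definition spread (z : nat -> W) (n : nat) : W :=
  if pselect (exists i, j i == n) is left ex_i then z (xchoose ex_i) else 0.

Lemma spreadB z z' : spread (z - z') = spread z - spread z'.
Proof.
by apply/funext => n; rewrite /spread !fctE; case: pselect; rewrite ?subr0.
Qed.

Lemma spread_out z n : (forall i, j i <> n) -> spread z n = 0.
Proof.
rewrite /spread => jn; case: pselect => // ex_i.
by exfalso; case: ex_i => i /eqP /(jn i).
Qed.

Hypothesis j_inj : injective j.

Lemma spread_at z i : spread z (j i) = z i.
Proof.
rewrite /spread; case: pselect => [ex_i|[]]; last by exists i.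
by move: (xchooseP ex_i) => /eqP /j_inj ->.
Qed.

End Spread.

Definition infinite_support (W : zmodType) (z : nat -> W) :=
  forall N, exists2 p, (N <= p)%N & z p != 0.

Definition shift (W : zmodType) (M : nat) : (nat -> W) -> nat -> W :=
  spread (addn^~ M).

Lemma addn_homo_ltn M : {homo addn^~ M : m n / (m < n)%N}.
Proof. by move=> m n; rewrite ltn_add2r. Qed.

Lemma shiftB (W : zmodType) M (z z' : nat -> W) :
  shift M (z - z') = shift M z - shift M z'.
Proof. exact: spreadB. Qed.

Lemma shift_at (W : zmodType) M (z : nat -> W) i : shift M z (i + M) = z i.
Proof. exact: (spread_at (@addIn M)). Qed.

Lemma shift_lt (W : zmodType) M (z : nat -> W) p : (p < M)%N -> shift M z p = 0.
Proof. by move=> lt_pM; apply: spread_out => i; lia. Qed.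

Lemma shift_fixpoint_at (K : pzRingType) (W : lmodType K) (x y : nat -> W) M t i :
  y = x + t *: shift M y -> (forall p, (M <= p)%N -> x p = 0) -> (i < M)%N ->
  forall k, y (k * M + i)%N = t ^+ k *: x i.
Proof.
move=> y_fix x_tail lt_iM; elim=> [|k IH]; rewrite {1}y_fix !fctE.
  by rewrite shift_lt // scaler0 addr0 scale1r.
have -> : (k.+1 * M + i = k * M + i + M)%N by rewrite mulSn; lia.
by rewrite x_tail ?leq_addl // shift_at IH add0r scalerA -exprS.
Qed.

Section DyadicCode.
Variable R : realType.

Lemma floor_eq_dist_lt1 (x y : R) :
  Num.floor x = Num.floor y -> `|x - y| < 1.
Proof.
move=> Exy; have := floor_itv x; have := floor_itv y.
rewrite Exy intrD ltr_norml; set m := _%:~R; lra.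
Qed.

Lemma geometric_half_lt (c e : R) : 0 < e ->
  exists N, forall n, (N <= n)%N -> c * 2^-1 ^+ n < e.
Proof.
move=> e_gt0; exists (Num.bound `|c / e|) => n le_Nn.
rewrite exprVn ltr_pdivrMr ?exprn_gt0 // -ltr_pdivrMl // mulrC.
rewrite (le_lt_trans (ler_norm _)) //.
rewrite (lt_le_trans (archi_boundP (normr_ge0 _))) //.
by rewrite -natrX ler_nat (leq_trans le_Nn) // ltnW // ltn_expl.
Qed.

Definition dyadic_code (r : R) (n : nat) : nat :=
  pickle (Num.floor (r * 2 ^+ n)).

Lemma dyadic_code_neq (r r' : R) : r != r' ->
  exists N, forall n, (N <= n)%N -> dyadic_code r n != dyadic_code r' n.
Proof.
rewrite -subr_eq0 -normr_gt0 => dist_gt0.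
have [N HN] := geometric_half_lt 1 dist_gt0.
exists N => n /HN; rewrite mul1r ltNge; apply: contra => /eqP /(pcan_inj pickleK).
move=> /floor_eq_dist_lt1; rewrite -mulrBl normrM normrX normr_nat => lt1.
by rewrite exprVn -div1r ler_pdivlMr ?exprn_gt0 // ltW.
Qed.

End DyadicCode.

Lemma eventually_seq (T : eqType) (P : T -> nat -> Prop) (s : seq T) :
  (forall x, x \in s -> exists N, forall n, (N <= n)%N -> P x n) ->
  exists N, forall n, (N <= n)%N -> forall x, x \in s -> P x n.
Proof.
elim: s => [|y s IH] Hs; first by exists 0%N.
have [Ny Hy] := Hs y (mem_head y s).
have [Ns HNs] := IH (fun x xs => Hs x (predU1r _ _ xs)).
exists (maxn Ny Ns) => n; rewrite geq_max => /andP[le_y le_s] x.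
by rewrite inE => /predU1P[->|/HNs]; [exact: Hy | exact].
Qed.

Section SpreadingFamily.
Variables (R : realType) (K : fieldType) (W : lmodType K).
Variables (V : (nat -> W) -> Prop) (nrm : (nat -> W) -> R).
Hypothesis spreadingV : spreading V nrm.

Lemma spread_mem j z : {homo j : m n / (m < n)%N} -> V z ->
  V (spread j z) /\ nrm (spread j z) <= nrm z.
Proof.
move=> j_mono Vz; apply: (spreadingV Vz j_mono); last exact: spread_out.
exact: (spread_at (incn_inj (leq_mono j_mono))).
Qed.

Lemma dim_ge_continuum_of_infinite_support z :
  V z -> infinite_support z -> dim_ge_continuum R V.
Proof.
move=> Vz z_inf; pose f (r : R) := spread (prefix_code (dyadic_code r)) z.
exists f; split=> [r|s s_uniq c sum0 r rs].
  exact: (spread_mem (prefix_code_mono _) Vz).1.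
have sep r' : r' \in s -> exists N, forall n, (N <= n)%N ->
    r' != r -> dyadic_code r' n != dyadic_code r n.
  move=> _; have [->|/dyadic_code_neq[N HN]] := eqVneq r' r.
    by exists 0%N => n _; rewrite eqxx.
  by exists N => n /HN.
have [N HN] := eventually_seq sep.
have [i le_Ni zi_neq0] := z_inf N.
have := sum0 (prefix_code (dyadic_code r) i).
rewrite (bigD1_seq r) //= big1_seq => [|r' /andP[r'_neq r's]]; last first.
  rewrite /f spread_out ?scaler0 // => m /prefix_code_eq [-> code_eq].
  by move: (HN i le_Ni r' r's r'_neq); rewrite code_eq eqxx.
rewrite addr0 /f spread_at; last exact: incn_inj (leq_mono (prefix_code_mono _)).
by move/eqP; rewrite scaler_eq0 (negbTE zi_neq0) orbF => /eqP.
Qed.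

End SpreadingFamily.

Section QuasiNormedSpace.
Variables (R : realType) (K : fieldType) (absK : K -> R) (W : lmodType K).
Variables (q : R) (V : (nat -> W) -> Prop) (nrm : (nat -> W) -> R).
Hypotheses (q_gt0 : 0 < q) (linV : lin_subspace V).
Hypotheses (qnormV : is_qnorm absK V nrm q) (completeV : qcomplete V nrm).
Hypothesis absKN1 : absK (-1) = 1.

Lemma mem0 : V 0. Proof. by case: linV. Qed.

Lemma memD u v : V u -> V v -> V (u + v).
Proof. by case: linV => _ [+ _]; apply. Qed.

Lemma memZ c u : V u -> V (c *: u).
Proof. by case: linV => _ [_ +]; apply. Qed.

Lemma memB u v : V u -> V v -> V (u - v).
Proof. by move=> Vu Vv; rewrite -scaleN1r; apply/memD/memZ. Qed.

Lemma nrm_ge0 u : V u -> 0 <= nrm u.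
Proof. by case: qnormV => + _; apply. Qed.

Lemma nrmZ c u : V u -> nrm (c *: u) = absK c * nrm u.
Proof. by case: qnormV => _ [_ [+ _]]; apply. Qed.

Definition qdist u v := nrm (u - v) `^ q.

Lemma qdist_ge0 u v : 0 <= qdist u v.
Proof. exact: powR_ge0. Qed.

Lemma qdistxx u : qdist u u = 0.
Proof.
case: qnormV => _ [nrm0 _].
by rewrite /qdist subrr (proj2 (nrm0 _ mem0)) // powR0 ?gt_eqF.
Qed.

Lemma qdist_eq0 u v : V u -> V v -> qdist u v = 0 -> u = v.
Proof.
case: qnormV => _ [nrm0 _] Vu Vv /powR_eq0_eq0 /(nrm0 _ (memB Vu Vv)) /eqP.
by rewrite subr_eq0 => /eqP.
Qed.

Lemma nrm_subC u v : V u -> V v -> nrm (u - v) = nrm (v - u).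
Proof.
by move=> Vu Vv; rewrite -opprB -scaleN1r nrmZ ?absKN1 ?mul1r //; apply: memB.
Qed.

Lemma qdistC u v : V u -> V v -> qdist u v = qdist v u.
Proof. by move=> Vu Vv; rewrite /qdist nrm_subC. Qed.

Lemma qdist_triangle u v w : V u -> V v -> V w ->
  qdist u w <= qdist u v + qdist v w.
Proof.
case: qnormV => _ [_ [_ qtriangle]] Vu Vv Vw.
by rewrite /qdist -(subrKA v); apply: qtriangle; apply: memB.
Qed.

Lemma qdist_lt u v e : V u -> V v -> 0 < e ->
  (qdist u v < e `^ q) = (nrm (u - v) < e).
Proof.
move=> Vu Vv e_gt0.
have nrm_nneg : nrm (u - v) \in Num.nneg.
  by rewrite nnegrE nrm_ge0 //; apply: memB.
have e_nneg : e \in Num.nneg by rewrite nnegrE ltW.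
apply/idP/idP; last exact: gt0_ltr_powR.
by apply: contraTT; rewrite -!leNgt; apply: ge0_ler_powR; rewrite // ltW.
Qed.

Section HalfContraction.
Variable T : (nat -> W) -> nat -> W.
Hypothesis memT : forall u, V u -> V (T u).
Hypothesis T_contract :
  forall u v, V u -> V v -> qdist (T u) (T v) <= 2^-1 * qdist u v.

Let C := qdist (T 0) 0.

Lemma mem_iter n : V (iter n T 0).
Proof. by elim: n => [|n IH]; [exact: mem0 | exact: memT]. Qed.

Lemma qdist_iterS n : qdist (iter n.+1 T 0) (iter n T 0) <= C * 2^-1 ^+ n.
Proof.
elim: n => [|n IH]; first by rewrite mulr1.
apply: (le_trans (T_contract (mem_iter n.+1) (mem_iter n))).
by rewrite exprS mulrCA ler_wpM2l // invr_ge0.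
Qed.

Lemma qdist_iter n k :
  qdist (iter (n + k) T 0) (iter n T 0) <=
    2 * C * 2^-1 ^+ n - 2 * C * 2^-1 ^+ (n + k).
Proof.
elim: k => [|k IH]; first by rewrite addn0 qdistxx subrr.
rewrite addnS.
apply: le_trans (qdist_triangle (mem_iter _) (mem_iter (n + k)) (mem_iter _)) _.
apply: le_trans (lerD (qdist_iterS _) IH) _.
rewrite exprS; lra.
Qed.

Lemma iter_cauchy e : 0 < e -> exists N, forall m n, (N <= m)%N -> (N <= n)%N ->
  nrm (iter m T 0 - iter n T 0) < e.
Proof.
move=> e_gt0; have [N HN] := geometric_half_lt (2 * C) (powR_gt0 q e_gt0).
have tail n k : (N <= n)%N -> nrm (iter (n + k) T 0 - iter n T 0) < e.
  move=> /HN lt_n; rewrite -(qdist_lt (mem_iter _) (mem_iter _) e_gt0).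
  apply: le_lt_trans (qdist_iter n k) _.
  have : 0 <= 2 * C * 2^-1 ^+ (n + k).
    by rewrite !mulr_ge0 ?qdist_ge0 ?exprn_ge0 ?invr_ge0.
  lra.
exists N => m n le_Nm le_Nn; case: (leqP n m) => [le_nm|/ltnW le_mn].
  by rewrite -(subnKC le_nm); apply: tail.
by rewrite (nrm_subC (mem_iter m) (mem_iter n)) -(subnKC le_mn); apply: tail.
Qed.

Lemma half_contraction_fixpoint : exists2 y, V y & T y = y.
Proof.
have [y [Vy iter_to_y]] := completeV mem_iter iter_cauchy.
exists y => //; apply: (qdist_eq0 (memT Vy) Vy).
have near_y eps : 0 < eps ->
    exists N, forall n, (N <= n)%N -> qdist (iter n T 0) y < eps.
  move=> eps_gt0; have e_gt0 : 0 < eps `^ q^-1 by apply: powR_gt0.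
  have [N HN] := iter_to_y _ e_gt0.
  exists N => n /HN; rewrite -(qdist_lt (mem_iter n) Vy e_gt0).
  by rewrite -powRrM mulVf ?gt_eqF // powRr1 // ltW.
have small eps : 0 < eps -> qdist (T y) y < eps.
  move=> eps_gt0; have [N HN] : exists N, forall n, (N <= n)%N ->
      qdist (iter n T 0) y < eps / 2 by apply: near_y; rewrite divr_gt0.
  have contr : qdist (T y) (iter N.+1 T 0) <= 2^-1 * qdist (iter N T 0) y.
    by rewrite (qdistC (mem_iter N) Vy); apply: T_contract (mem_iter N).
  have := qdist_triangle (memT Vy) (mem_iter N.+1) Vy.
  have := HN N (leqnn N); have := HN N.+1 (leqnSn N).
  have := qdist_ge0 (iter N T 0) y; lra.
apply/eqP; rewrite eq_le qdist_ge0 andbT leNgt; apply/negP => /small.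
by rewrite ltxx.
Qed.

End HalfContraction.

Section ShiftContraction.
Hypothesis spreadingV : spreading V nrm.
Variable t : K.
Hypotheses (t_neq0 : t != 0) (abs_t : absK t = 2^-1 `^ q^-1).

Lemma mem_shift M u : V u -> V (shift M u).
Proof. by move=> Vu; have [] := spread_mem spreadingV (addn_homo_ltn M) Vu. Qed.

Lemma qdist_shift_contraction x M u v : V u -> V v ->
  qdist (x + t *: shift M u) (x + t *: shift M v) <= 2^-1 * qdist u v.
Proof.
move=> Vu Vv; have Vuv := memB Vu Vv.
have [Vs nrm_s] := spread_mem spreadingV (addn_homo_ltn M) Vuv.
rewrite /qdist.
have -> : x + t *: shift M u - (x + t *: shift M v) = t *: shift M (u - v).
  by rewrite shiftB scalerBr opprD addrACA subrr add0r.
rewrite nrmZ // abs_t powRM ?powR_ge0 ?nrm_ge0 //.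
rewrite -powRrM mulVf ?gt_eqF // powRr1 ?invr_ge0 ?ler0n //.
rewrite ler_wpM2l ?invr_ge0 //.
by apply: ge0_ler_powR; rewrite ?nnegrE ?nrm_ge0 // ltW.
Qed.

Lemma exists_infinite_support x : V x -> x <> 0 ->
  exists2 y, V y & infinite_support y.
Proof.
move=> Vx x_neq0.
have [x_inf|] := pselect (infinite_support x); first by exists x.
move=> /existsNP [M x_finite].
have x_tail p : (M <= p)%N -> x p = 0.
  by move=> le_Mp; apply/eqP; apply: contra_notT x_finite => ?; exists p.
have [i /eqP xi_neq0] : exists i, x i <> 0.
  by apply/existsNP => x0; apply/x_neq0/funext.
have lt_iM : (i < M)%N by rewrite ltnNge; apply: contra xi_neq0 => /x_tail ->.
have [y Vy y_fix] := half_contraction_fixpoint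
  (fun u Vu => memD Vx (memZ t (mem_shift M Vu))) (qdist_shift_contraction x M).
exists y => // N; exists (N * M + i)%N.
  by rewrite (leq_trans (leq_pmulr N (leq_ltn_trans (leq0n i) lt_iM))) ?leq_addr.
rewrite (shift_fixpoint_at (esym y_fix)) //.
by rewrite scaler_eq0 expf_eq0 (negbTE t_neq0) andbF.
Qed.

End ShiftContraction.

End QuasiNormedSpace.

Theorem spreading_qspace_dim_ge_continuum (R : realType) (K : fieldType)
    (absK : K -> R) (W : lmodType K) (q : R) (V : (nat -> W) -> Prop)
    (nrm : (nat -> W) -> R) (t : K) :
  0 < q -> absK (-1) = 1 -> t != 0 -> absK t = 2^-1 `^ q^-1 ->
  spreading_qspace absK V nrm q -> (exists x, V x /\ x <> 0) ->
  dim_ge_continuum R V.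
Proof.
move=> q_gt0 absKN1 t_neq0 abs_t [linV [qnormV [completeV spreadingV]]].
move=> [x [Vx x_neq0]].
have [y Vy y_inf] := exists_infinite_support q_gt0 linV qnormV completeV absKN1
  spreadingV t_neq0 abs_t Vx x_neq0.
exact: (dim_ge_continuum_of_infinite_support spreadingV Vy y_inf).
Qed.

Theorem lemma3p1 :
  (* case K = R *)
  (forall (R : realType) (W : lmodType R) (q : R)
          (V : (nat -> W) -> Prop) (nrm : (nat -> W) -> R),
      0 < q <= 1 ->
      spreading_qspace (@Num.norm R R) V nrm q ->
      (exists x, V x /\ x <> seq0 W) ->
      dim_ge_continuum R V) /\
  (* case K = C = R[i] *)
  (forall (R : realType) (W : lmodType R[i]) (q : R)
          (V : (nat -> W) -> Prop) (nrm : (nat -> W) -> R),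
      0 < q <= 1 ->
      spreading_qspace (@ComplexField.Normc.normc R) V nrm q ->
      (exists x, V x /\ x <> seq0 W) ->
      dim_ge_continuum R V).
Proof.
split=> R W q V nrm /andP[q_gt0 _];
  have tau_gt0 : 0 < (2^-1 : R) `^ q^-1 by rewrite powR_gt0 ?invr_gt0.
- apply: (spreading_qspace_dim_ge_continuum (t := 2^-1 `^ q^-1) q_gt0).
  + exact: normrN1.
  + exact: lt0r_neq0.
  + by rewrite gtr0_norm.
- apply: (spreading_qspace_dim_ge_continuum (t := (2^-1 `^ q^-1)%:C%C) q_gt0).
  + by rewrite normcN ComplexField.Normc.normc1.
  + by rewrite eq_complex /= negb_and gt_eqF.
  + by rewrite /= expr0n addr0 sqrtr_sqr gtr0_norm.
Qed.
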